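(* Let $n\ge2$, $L>1$, let $\sigma_{1,1}$ be as below, and define $f_{1,1}:[1,\infty)\to\mathbb{R}$ by $f_{1,1}(r)=r+\frac{1+\sigma_{1,1}}{n-1-\sigma_{1,1}}\,r^{-(n-1)}$. Define $F,G:[1,\infty)\to\mathbb{R}$ by $$F(r)=(f_{1,1}'(r))^2+\frac{n-1}{r^2}f_{1,1}(r)^2,\qquad G(r)=2f_{1,1}(r)f_{1,1}'(r)+\frac{n-1}{r}f_{1,1}(r)^2.$$ Then $F$ is a decreasing function of $r$ and $G$ is an increasing function of $r$ on $[1,\infty)$.
   Context: $\sigma_{1,1}$ is the smaller root of $\tilde A\sigma^2+\tilde B\sigma+\tilde C=0$ with $\tilde A=L(L^n-1)$, $\tilde B=-\{L^n+(n-1)L^{n+1}+L+n-1\}$, $\tilde C=(n-1)(L^n-1)$; it is the first nonzero Steklov eigenvalue of the annulus $\{x\in\mathbb{R}^n:1<|x|<L\}$. *)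

From Stdlib Require Import Reals.
From Coquelicot Require Import Coquelicot.
Open Scope R_scope.

(* Coefficients of the quadratic  A s^2 + B s + C = 0  (n = dimension, L = outer radius). *)
Definition At (n : nat) (L : R) : R := L * (L ^ n - 1).
Definition Bt (n : nat) (L : R) : R :=
  - (L ^ n + (INR n - 1) * L ^ (n + 1) + L + (INR n - 1)).
Definition Ct (n : nat) (L : R) : R := (INR n - 1) * (L ^ n - 1).

(* sigma_{1,1}: the smaller root of the quadratic (At > 0 for L > 1). *)
Definition sigma11 (n : nat) (L : R) : R :=
  (- Bt n L - sqrt (Bt n L ^ 2 - 4 * At n L * Ct n L)) / (2 * At n L).

Definition f11 (n : nat) (L : R) (r : R) : R :=
  r + (1 + sigma11 n L) / (INR n - 1 - sigma11 n L) * / r ^ (n - 1).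

Definition Ffun (n : nat) (L : R) (r : R) : R :=
  (Derive (f11 n L) r) ^ 2 + (INR n - 1) / r ^ 2 * (f11 n L r) ^ 2.

Definition Gfun (n : nat) (L : R) (r : R) : R :=
  2 * f11 n L r * Derive (f11 n L) r + (INR n - 1) / r * (f11 n L r) ^ 2.

(* Put m = n - 1 and y(r) = c / r^(m+1), where c is the coefficient of f_{1,1}.  Expanding
   the squares, F = 1 + m + m (m+1) y^2 and G = r (2 + m + 2 y - m y^2).  Since c <> 0 (because
   -1 < sigma_{1,1} < n - 1), y^2 decreases strictly, hence so does F; and
   G' = 2 + m - 2 m y + m (2m+1) y^2, a quadratic in y with negative discriminant, is positive.
   The bounds on sigma_{1,1} hold because the quadratic defining it is positive at -1 and
   negative at n - 1. *)
From Stdlib Require Import Reals Lra Lia Psatz.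
From Coquelicot Require Import Coquelicot.
Open Scope R_scope.

Lemma pow_lt_compat_l (x y : R) (k : nat) :
  0 < x -> x < y -> (0 < k)%nat -> x ^ k < y ^ k.
Proof.
  intros hx hxy hk; induction k as [|k IH]; [lia|].
  destruct k as [|k]; [simpl; lra|].
  assert (hxk : 0 < x ^ S k) by (apply pow_lt; lra).
  assert (IH' : x ^ S k < y ^ S k) by (apply IH; lia).
  change (x * x ^ S k < y * y ^ S k); nra.
Qed.

Lemma smaller_root_between (A B C a b : R) :
  0 < A -> a < b -> 0 < A * a ^ 2 + B * a + C -> A * b ^ 2 + B * b + C < 0 ->
  a < (- B - sqrt (B ^ 2 - 4 * A * C)) / (2 * A) < b.
Proof.
  intros hA hab ha hb.
  set (D := B ^ 2 - 4 * A * C).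
  assert (hq : forall x, (2 * A * x + B) ^ 2 - D = 4 * A * (A * x ^ 2 + B * x + C))
    by (intros; unfold D; ring).
  assert (hbD : (2 * A * b + B) ^ 2 < D).
  { assert (4 * A * (A * b ^ 2 + B * b + C) < 0) by nra. specialize (hq b); lra. }
  assert (haD : D < (2 * A * a + B) ^ 2).
  { assert (0 < 4 * A * (A * a ^ 2 + B * a + C)) by nra. specialize (hq a); lra. }
  assert (hs : sqrt D * sqrt D = D)
    by (apply sqrt_sqrt; pose proof (pow2_ge_0 (2 * A * b + B)); lra).
  pose proof (sqrt_pos D) as hs0.
  assert (hbs : - sqrt D < 2 * A * b + B < sqrt D) by (split; nra).
  assert (has : 2 * A * a + B < - sqrt D).
  { destruct (Rlt_or_le (2 * A * a + B) (- sqrt D)) as [h | h]; [exact h|].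
    assert (2 * A * a + B < sqrt D) by nra. nra. }
  split; [apply Rlt_div_r | apply Rlt_div_l]; lra.
Qed.

Lemma sigma11_bounds (n : nat) (L : R) :
  (2 <= n)%nat -> 1 < L -> -1 < sigma11 n L < INR n - 1.
Proof.
  intros hn hL.
  assert (hP : 1 < L ^ n) by (apply Rlt_pow_R1; [lra | lia]).
  assert (hm : 1 <= INR n - 1) by (apply le_INR in hn; simpl in hn; lra).
  unfold sigma11, At, Bt, Ct; rewrite pow_add, pow_1.
  set (P := L ^ n) in *; set (m := INR n - 1) in *.
  apply smaller_root_between.
  - nra.
  - lra.
  - replace (L * (P - 1) * (-1) ^ 2 + - (P + m * (P * L) + L + m) * -1 + m * (P - 1))
      with ((m + 1) * (P * L + P)) by ring.
    apply Rmult_lt_0_compat; nra.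
  - replace (L * (P - 1) * m ^ 2 + - (P + m * (P * L) + L + m) * m + m * (P - 1))
      with (- (m * (m + 1) * (L + 1))) by ring.
    assert (0 < m * (m + 1) * (L + 1)) by (apply Rmult_lt_0_compat; nra).
    lra.
Qed.

Lemma G_derivative_quadratic_pos (m y : R) :
  0 <= m -> 0 < 2 + m - 2 * m * y + m * (2 * m + 1) * y ^ 2.
Proof.
  intros hm.
  assert (hsq : 0 <= m * ((2 * m + 1) * y - 1) ^ 2)
    by (apply Rmult_le_pos; [lra | apply pow2_ge_0]).
  assert (hid : (2 * m + 1) * (2 + m - 2 * m * y + m * (2 * m + 1) * y ^ 2)
                = m * ((2 * m + 1) * y - 1) ^ 2 + (2 * m + 1) * (2 + m) - m) by ring.
  assert (hpos : 0 < (2 * m + 1) * (2 + m - 2 * m * y + m * (2 * m + 1) * y ^ 2)) by nra.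
  apply (Rmult_lt_reg_l (2 * m + 1)); lra.
Qed.

Section Profile.

Variables (c : R) (m : nat).

Definition profile (r : R) : R := r + c * / r ^ m.

Definition decay (r : R) : R := c / r ^ S m.

Definition G_profile (r : R) : R := r * (2 + INR m + 2 * decay r - INR m * decay r ^ 2).

Lemma is_derive_profile (r : R) :
  0 < r -> is_derive profile r (1 - INR m * decay r).
Proof.
  intros hr; pose proof (pow_lt r m hr).
  unfold profile, decay; auto_derive; [lra|].
  destruct m as [|k]; simpl; [ring|].
  field; split; [apply pow_nonzero |]; lra.
Qed.

Lemma Derive_profile (r : R) : 0 < r -> Derive profile r = 1 - INR m * decay r.
Proof. intros hr; apply is_derive_unique, is_derive_profile, hr. Qed.

Lemma profile_F_closed_form (r : R) : 0 < r ->
  (1 - INR m * decay r) ^ 2 + INR m / r ^ 2 * profile r ^ 2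
  = 1 + INR m + INR m * (INR m + 1) * decay r ^ 2.
Proof.
  intros hr; pose proof (pow_lt r m hr).
  unfold profile, decay; simpl; field; split; lra.
Qed.

Lemma profile_G_closed_form (r : R) : 0 < r ->
  2 * profile r * (1 - INR m * decay r) + INR m / r * profile r ^ 2
  = G_profile r.
Proof.
  intros hr; pose proof (pow_lt r m hr).
  unfold G_profile, profile, decay; simpl; field; split; lra.
Qed.

Lemma decay_sqr_decreasing (r1 r2 : R) :
  c <> 0 -> 0 < r1 -> r1 < r2 -> decay r2 ^ 2 < decay r1 ^ 2.
Proof.
  intros hc h1 h12.
  assert (hp : r1 ^ S m < r2 ^ S m) by (apply pow_lt_compat_l; lia || lra).
  assert (hp1 : 0 < r1 ^ S m) by (apply pow_lt; lra).
  unfold decay, Rdiv; rewrite !Rpow_mult_distr.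
  apply Rmult_lt_compat_l; [rewrite <- Rsqr_pow2; apply Rsqr_pos_lt, hc |].
  apply pow_lt_compat_l; [apply Rinv_0_lt_compat; lra | | lia].
  apply Rinv_lt_contravar; nra.
Qed.

Lemma is_derive_G_closed_form (r : R) : 0 < r ->
  is_derive G_profile r
    (2 + INR m - 2 * INR m * decay r + INR m * (2 * INR m + 1) * decay r ^ 2).
Proof.
  intros hr; pose proof (pow_lt r m hr).
  unfold G_profile, decay; auto_derive; [repeat split; nra|].
  (* auto_derive leaves [INR (S m)] unfolded *)
  change (match m with 0%nat => 1 | S _ => INR m + 1 end) with (INR (S m)).
  rewrite S_INR; simpl; field; split; lra.
Qed.

End Profile.

Theorem lemma3p1 (n : nat) (L : R) (hn : (2 <= n)%nat) (hL : 1 < L) :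
  (forall r1 r2 : R, 1 <= r1 -> r1 < r2 -> Ffun n L r2 < Ffun n L r1) /\
  (forall r1 r2 : R, 1 <= r1 -> r1 < r2 -> Gfun n L r1 < Gfun n L r2).
Proof.
  pose proof (sigma11_bounds n L hn hL) as [hs1 hs2].
  set (m := (n - 1)%nat).
  assert (hm : INR n - 1 = INR m) by (unfold m; rewrite minus_INR by lia; simpl; ring).
  assert (hm1 : 1 <= INR m) by (apply (le_INR 1); unfold m; lia).
  set (c := (1 + sigma11 n L) / (INR n - 1 - sigma11 n L)).
  assert (hc : 0 < c) by (apply Rdiv_lt_0_compat; lra).
  assert (hf : f11 n L = profile c m) by reflexivity.
  assert (hF : forall r, 0 < r ->
    Ffun n L r = 1 + INR m + INR m * (INR m + 1) * decay c m r ^ 2).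
  { intros r hr; unfold Ffun; rewrite hf, Derive_profile, hm by exact hr.
    apply profile_F_closed_form, hr. }
  assert (hG : forall r, 0 < r ->
    Gfun n L r = G_profile c m r).
  { intros r hr; unfold Gfun; rewrite hf, Derive_profile, hm by exact hr.
    apply profile_G_closed_form, hr. }
  split; intros r1 r2 h1 h12.
  - rewrite !hF by lra.
    pose proof (decay_sqr_decreasing c m r1 r2 ltac:(lra) ltac:(lra) h12).
    assert (0 < INR m * (INR m + 1)) by nra.
    nra.
  - rewrite !hG by lra.
    apply (incr_function (G_profile c m) (Finite 0) p_infty
      (fun x => 2 + INR m - 2 * INR m * decay c m x
                + INR m * (2 * INR m + 1) * decay c m x ^ 2)); simpl; try lra.
    + intros x hx _; apply is_derive_G_closed_form, hx.
    + intros x _ _; apply G_derivative_quadratic_pos; lra.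
Qed.
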